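(* Let $E$ be a finite set and let $P$ be a nonempty partition of the set $\cup P$, where $\cup P\subseteq E$. Let $M_E(P)$ be the unique partition matroid determined by $P$. Then $F(M_E(P))=P$.
   Context: For a set family $S$, $\cup S=\bigcup_{X\in S}X$. A partition of a set $U$ is a family of nonempty, pairwise disjoint subsets of $U$ with union $U$. The unique partition matroid $M_E(P)$ is the matroid $(E,\mathcal{I}_P)$ with $\mathcal{I}_P=\{X\subseteq\cup P: |X\cap D|\le 1 \text{ for all } D\in P\}$. For a matroid $M$ with independent sets $\mathcal{I}(M)$, rank function $r$ and rank $r(M)>0$: $s(M)=\{A\in\mathcal{I}(M): |A|=r(M)-1\}$; $K_M(X)=\{a\in E: r(X\cup\{a\})=r(X)+1\}$; and the forming base family is $F(M)=\{K_M(X): X\in s(M)\}$. *)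

From mathcomp Require Import all_boot.
Set Implicit Arguments. Unset Strict Implicit. Unset Printing Implicit Defensive.

(* A matroid on ground set E (a finite set of elements of a finType T) is
   represented by its family of independent sets I : {set {set T}}. *)
Section MatroidNotions.
Variable T : finType.

Definition mrank (I : {set {set T}}) (X : {set T}) : nat :=
  \max_(Y in I | Y \subset X) #|Y|.

Definition mrankM (E : {set T}) (I : {set {set T}}) : nat := mrank I E.

Definition sM (E : {set T}) (I : {set {set T}}) : {set {set T}} :=
  [set A in I | #|A| == (mrankM E I).-1].

Definition KM (E : {set T}) (I : {set {set T}}) (X : {set T}) : {set T} :=
  [set a in E | mrank I (a |: X) == (mrank I X).+1].

Definition FM (E : {set T}) (I : {set {set T}}) : {set {set T}} :=
  [set KM E I X | X in sM E I].

(* independent sets of the partition matroid M_E(P) *)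
Definition partI (P : {set {set T}}) : {set {set T}} :=
  [set X : {set T} | (X \subset cover P) && [forall D in P, #|X :&: D| <= 1]].

End MatroidNotions.

From mathcomp Require Import all_boot.
Set Implicit Arguments. Unset Strict Implicit. Unset Printing Implicit Defensive.

(* In the partition matroid the rank of X is the number of blocks of P that
   X meets: an independent set meets distinct blocks in distinct points, and
   picking one point of X in each block it meets gives an independent
   transversal.  Hence r(M) = #|P|, an independent A of size #|P| - 1 misses
   exactly one block D, and adding a to A raises the rank iff a lies in D:
   K_M(A) = D.  Conversely every block D arises this way, taking for A an
   independent transversal of cover P minus D. *)

Lemma card_setD1_subset (T : finType) (S P : {set T}) :
  0 < #|P| -> S \subset P -> #|S| = #|P|.-1 -> exists2 D, D \in P & S = P :\ D.
Proof.
move=> P_gt0 SP cardS.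
have /cards1P[D defD] : #|P :\: S| == 1.
  by rewrite cardsD (setIidPr SP) cardS; case: #|P| P_gt0 => // n _; rewrite subSnn.
have : D \in P :\: S by rewrite defD set11.
rewrite inE => /andP[DnS DP]; exists D => //; apply/eqP.
rewrite eqEcard cardS (cardsD1 D P) DP leqnn andbT.
by apply/subsetP=> D' D'S; rewrite in_setD1 (subsetP SP) // andbT;
   apply: contraNneq DnS => <-.
Qed.

Section PartitionMatroid.
Variable T : finType.
Variable P : {set {set T}}.
Hypothesis trivP : trivIset P.
Hypothesis set0_notin_P : set0 \notin P.

Definition blocks_hit (X : {set T}) := [set D in P | D :&: X != set0].

Lemma blocks_hit_subset (X : {set T}) : blocks_hit X \subset P.
Proof. by apply/subsetP=> D; rewrite inE => /andP[]. Qed.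

Lemma blocks_hitS (X Y : {set T}) :
  X \subset Y -> blocks_hit X \subset blocks_hit Y.
Proof.
move=> XY; apply/subsetP=> D; rewrite !inE => /andP[-> /set0Pn[x]].
rewrite inE => /andP[xD xX]; apply/set0Pn; exists x; rewrite inE xD.
exact: (subsetP XY).
Qed.

Lemma blocks_hitU1 (a : T) (A : {set T}) :
  blocks_hit (a |: A) =
    if a \in cover P then pblock P a |: blocks_hit A else blocks_hit A.
Proof.
have meetU1 D : (D :&: (a |: A) != set0) = (a \in D) || (D :&: A != set0).
  rewrite setIUr setU_eq0 negb_and; congr (_ || _).
  by rewrite setI_eq0 disjoint_sym disjoints1 negbK.
case: ifP => aP; apply/setP=> D; rewrite !inE meetU1;
  case: (boolP (D \in P)) => DP //=.
- case: (boolP (a \in D)) => aD /=; first by rewrite (def_pblock trivP DP aD) eqxx.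
  by case: (eqVneq D (pblock P a)) => // eqD; case/negP: aD; rewrite eqD mem_pblock.
- rewrite orbF; apply/esym/negbTE; apply: contraNneq DP => ->; exact: pblock_mem.
- case: (boolP (a \in D)) => aD //=.
  suff : a \in cover P by rewrite aP.
  by apply/bigcupP; exists D.
Qed.

Lemma card_blocks_hit_indep (Y : {set T}) :
  Y \in partI P -> #|blocks_hit Y| = #|Y|.
Proof.
rewrite inE => /andP[Ycov /forall_inP Y_le1].
have <- : pblock P @: Y = blocks_hit Y.
  apply/setP=> D; apply/imsetP/idP => [[y yY ->]|].
    have yP := subsetP Ycov y yY.
    rewrite inE pblock_mem //=; apply/set0Pn; exists y.
    by rewrite inE mem_pblock yP.
  rewrite inE => /andP[DP /set0Pn[y]]; rewrite inE => /andP[yD yY].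
  by exists y => //; rewrite (def_pblock trivP DP yD).
apply: card_in_imset => y1 y2 y1Y y2Y eq_pblock.
have y1P := subsetP Ycov y1 y1Y; have y2P := subsetP Ycov y2 y2Y.
apply: (card_le1_eqP (Y_le1 _ (pblock_mem y1P))); rewrite inE ?y1Y ?y2Y /=.
  by rewrite eq_pblock mem_pblock.
by rewrite mem_pblock.
Qed.

Lemma indep_transversal (X : {set T}) :
  exists Y, [/\ Y \in partI P, Y \subset X & blocks_hit Y = blocks_hit X].
Proof.
(* Y keeps, in each block met by X, the one point of X that [pick] selects. *)
pose Y := [set x in X :&: cover P | [pick y in pblock P x :&: X] == Some x].
have Y_pblock x D : x \in Y -> D \in P -> x \in D ->
    [pick y in D :&: X] = Some x.
  by rewrite !inE => /andP[_ /eqP <-] DP xD; rewrite (def_pblock trivP DP xD).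
exists Y; split.
- rewrite inE; apply/andP; split.
    by apply/subsetP=> x; rewrite !inE => /andP[/andP[]].
  apply/forall_inP=> D DP; apply/card_le1_eqP=> x y.
  rewrite !in_setI => /andP[xY xD] /andP[yY yD].
  by move: (Y_pblock x D xY DP xD); rewrite (Y_pblock y D yY DP yD) => -[].
- by apply/subsetP=> x; rewrite !inE => /andP[/andP[]].
apply/eqP; rewrite eqEsubset blocks_hitS; last first.
  by apply/subsetP=> x; rewrite !inE => /andP[/andP[]].
apply/subsetP=> D; rewrite !inE => /andP[DP /set0Pn[z /setIP[zD zX]]].
have [y /setIP[yD yX] pick_y] :
    exists2 y, y \in D :&: X & [pick y in D :&: X] = Some y.
  by case: pickP => [y yDX|/(_ z)]; [exists y | rewrite inE zD zX].
rewrite DP; apply/set0Pn; exists y; rewrite !inE yD yX /=.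
have yP : y \in cover P by apply/bigcupP; exists D.
by rewrite yP (def_pblock trivP DP yD) pick_y eqxx.
Qed.

Lemma mrank_partI (X : {set T}) : mrank (partI P) X = #|blocks_hit X|.
Proof.
apply/eqP; rewrite eqn_leq; apply/andP; split.
  apply/bigmax_leqP=> Y /andP[YI YX].
  by rewrite -card_blocks_hit_indep // subset_leq_card // blocks_hitS.
have [Y [YI YX <-]] := indep_transversal X.
rewrite card_blocks_hit_indep //.
apply: (leq_bigmax_cond (P := fun Y => (Y \in partI P) && (Y \subset X))).
by rewrite YI.
Qed.

Lemma blocks_hit_cover (E : {set T}) : cover P \subset E -> blocks_hit E = P.
Proof.
move=> PE; apply/eqP; rewrite eqEsubset blocks_hit_subset.
apply/subsetP=> D DP; rewrite inE DP.
have /set0Pn[x xD] : D != set0 by apply: contraNN set0_notin_P => /eqP <-.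
apply/set0Pn; exists x; rewrite inE xD (subsetP PE) //.
by apply/bigcupP; exists D.
Qed.

Lemma blocks_hit_cover_setD (D : {set T}) :
  D \in P -> blocks_hit (cover P :\: D) = P :\ D.
Proof.
move=> DP; apply/setP=> D'; rewrite in_setD1 inE.
case: (boolP (D' \in P)) => D'P; rewrite ?andbF ?andbT //.
case: (eqVneq D' D) => [->|neq] /=.
  by rewrite setDE setICA setICr setI0 eqxx.
have /set0Pn[x xD'] : D' != set0 by apply: contraNN set0_notin_P => /eqP <-.
have xP : x \in cover P by apply/bigcupP; exists D'.
apply/set0Pn; exists x; rewrite !inE xD' xP andbT /=.
apply: contra neq => xD; apply/eqP.
by rewrite -(def_pblock trivP D'P xD') (def_pblock trivP DP xD).
Qed.

Lemma KM_partI (E A : {set T}) : cover P \subset E ->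
  KM E (partI P) A = [set a in cover P | pblock P a \notin blocks_hit A].
Proof.
move=> PE; apply/setP=> a; rewrite /KM [LHS]inE !mrank_partI blocks_hitU1.
move: (blocks_hit A) => S; rewrite !inE.
case: ifP => aP /=; last by rewrite (ltn_eqF (ltnSn _)) andbF.
rewrite (subsetP PE a aP) cardsU1.
by case: (_ \in S); rewrite /= ?add0n ?add1n ?eqxx ?(ltn_eqF (ltnSn _)).
Qed.

Lemma KM_partI_missing (E A D : {set T}) : cover P \subset E -> D \in P ->
  blocks_hit A = P :\ D -> KM E (partI P) A = D.
Proof.
move=> PE DP hitA; rewrite KM_partI // hitA; apply/setP=> a; rewrite !inE.
case: (boolP (a \in cover P)) => aP /=; last first.
  by apply/esym; apply: contraNF aP => aD; apply/bigcupP; exists D.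
rewrite pblock_mem // andbT negbK; apply/eqP/idP => [<-|aD].
  by rewrite mem_pblock.
by rewrite (def_pblock trivP DP aD).
Qed.

End PartitionMatroid.

Theorem theorem6 (T : finType) (E : {set T}) (P : {set {set T}}) :
  partition P (cover P) -> P != set0 -> cover P \subset E ->
  FM E (partI P) = P.
Proof.
move=> /and3P[_ trivP set0_notin_P] P_neq0 PE.
have rankM : mrankM E (partI P) = #|P|.
  by rewrite /mrankM (mrank_partI trivP) (blocks_hit_cover set0_notin_P PE).
apply/setP=> D; apply/imsetP/idP => [[A]|DP].
  rewrite inE rankM => /andP[AI /eqP cardA] ->.
  have [D0 D0P hitA] : exists2 D0, D0 \in P & blocks_hit P A = P :\ D0.
    apply: card_setD1_subset; rewrite ?card_gt0 ?blocks_hit_subset //.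
    by rewrite (card_blocks_hit_indep trivP).
  by rewrite (KM_partI_missing trivP PE D0P hitA).
have [Y [YI _ hitY]] := indep_transversal trivP (cover P :\: D).
rewrite (blocks_hit_cover_setD trivP set0_notin_P DP) in hitY.
exists Y; last by rewrite (KM_partI_missing trivP PE DP hitY).
rewrite inE YI rankM -(card_blocks_hit_indep trivP YI) hitY.
by rewrite (cardsD1 D P) DP add1n eqxx.
Qed.
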